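(* Let $i\neq j\in I$, let $Z_0$ be an irreducible component of $\Lambda_{\mathbf V'}$ with $t_i^*(Z_0)=0$, let $c\in\mathbb N$, and let $Z=\eta^*_{i,c}(Z_0)$. Then $t_j(Z)=t_j(Z_0)$.
   Context: Symmetric Cartan datum $(I,(-,-))$ with loop-free graph; $H$ the set of oriented edges $h:h'\to h''$, reversal $\bar h$; $\epsilon:H\to\mathbb C^*$ with $\epsilon(h)+\epsilon(\bar h)=0$. For an $I$-graded complex space $\mathbf V$: $\mathbf E_{\mathbf V}=\bigoplus_{h\in H}\mathrm{Hom}(\mathbf V_{h'},\mathbf V_{h''})$, $\mu(x)_i=\sum_{h''=i}\epsilon(h)x_hx_{\bar h}$, $\Lambda_{\mathbf V}$ = nilpotent $x$ with $\mu(x)=0$. Let $\Lambda_{\mathbf V,j,p}=\{x\in\Lambda_{\mathbf V}:\operatorname{codim}_{\mathbf V_j}\operatorname{Im}\bigoplus_{h\in H,h''=j}x_h=p\}$ and $\Lambda^p_{\mathbf V,i}=\{x:\dim\ker\bigoplus_{h\in H,h'=i}x_h=p\}$; for $Z\in\operatorname{Irr}\Lambda_{\mathbf V}$, $t_j(Z)$ (resp. $t_i^*(Z)$) is the $p$ with $Z\cap\Lambda_{\mathbf V,j,p}$ (resp. $Z\cap\Lambda^p_{\mathbf V,i}$) dense in $Z$. For $|\mathbf V|=|\mathbf V'|+|\mathbf V''|$: $\Lambda''=\{(x,\tilde{\mathbf W})\}$ ($x\in\Lambda_{\mathbf V}$, $\tilde{\mathbf W}$ $x$-stable, $|\tilde{\mathbf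 W}|=|\mathbf V''|$), $\Lambda'$ adds isomorphisms $\rho_1:\mathbf V/\tilde{\mathbf W}\cong\mathbf V'$, $\rho_2:\tilde{\mathbf W}\cong\mathbf V''$, $p(x,\tilde{\mathbf W},\rho_1,\rho_2)=(\rho_1\bar x\rho_1^{-1},\rho_2x|_{\tilde{\mathbf W}}\rho_2^{-1})$, $r$ forgets $\rho$'s, $q(x,\tilde{\mathbf W})=x$. If $|\mathbf V''|=ci$ and $Z'\in\operatorname{Irr}\Lambda_{\mathbf V'}$ with $t_i^*(Z')=0$, $\eta^*_{i,c}(Z')$ is the closure of $qrp^{-1}((Z'\cap\Lambda^0_{\mathbf V',i})\times\Lambda_{\mathbf V''})$, an irreducible component of $\Lambda_{\mathbf V}$ with $t_i^*=c$ ($\eta^*_{i,c}$ is a bijection onto $\{t_i^*=c\}$). *)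

From HB Require Import structures.
From mathcomp Require Import all_boot all_order all_algebra.
From mathcomp Require Import reals.
From mathcomp Require Import complex.
Set Implicit Arguments. Unset Strict Implicit. Unset Printing Implicit Defensive.
Import Order.TTheory GRing.Theory Num.Theory.
Local Open Scope ring_scope.

(* The set I = 'I_r of vertices; H the set of oriented edges of a      *)
(* loop-free graph, with source h', target h'' and reversal h |-> \bar h. *)
Record dgraph (r : nat) := DGraph {
  edge : finType;
  src : edge -> 'I_r;
  tgt : edge -> 'I_r;
  erev : edge -> edge;
  revK : involutive erev;
  src_rev : forall h, src (erev h) = tgt h;
  tgt_rev : forall h, tgt (erev h) = src h;
  noloop : forall h, src h != tgt h }.

Definition Rep (C : Type) (r : nat) (Q : dgraph r) (v : 'I_r -> nat) :=
  forall h : edge Q, 'M[C]_(v (tgt h), v (src h)).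

Section Quiver.
Variable R : realType.
Local Notation C := (complex R).
Variables (r : nat) (Q : dgraph r).
Variable eps : edge Q -> C.

Section Dim.
Variable v : 'I_r -> nat.

Inductive polyfun : (Rep C Q v -> C) -> Prop :=
| pf_const (c : C) : polyfun (fun _ => c)
| pf_coord (h : edge Q) (a : 'I_(v (tgt h))) (b : 'I_(v (src h))) :
    polyfun (fun x => x h a b)
| pf_add f g : polyfun f -> polyfun g -> polyfun (fun x => f x + g x)
| pf_mul f g : polyfun f -> polyfun g -> polyfun (fun x => f x * g x).

Definition zclosed (S : Rep C Q v -> Prop) : Prop :=
  exists F : (Rep C Q v -> C) -> Prop,
    (forall f, F f -> polyfun f) /\
    (forall x, S x <-> (forall f, F f -> f x = 0)).

Definition zcl (S : Rep C Q v -> Prop) : Rep C Q v -> Prop :=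
  fun x => forall T, zclosed T -> (forall y, S y -> T y) -> T x.

Definition dense_in (A Z : Rep C Q v -> Prop) : Prop :=
  forall x, Z x -> zcl A x.

Definition irreducible (Z : Rep C Q v -> Prop) : Prop :=
  (exists x, Z x) /\
  forall A B, zclosed A -> zclosed B ->
    (forall x, Z x -> A x \/ B x) ->
    (forall x, Z x -> A x) \/ (forall x, Z x -> B x).

Definition irr_component (L Z : Rep C Q v -> Prop) : Prop :=
  irreducible Z /\ (forall x, Z x -> L x) /\
  forall Z', irreducible Z' -> (forall x, Z x -> Z' x) ->
     (forall x, Z' x -> L x) -> forall x, Z' x <-> Z x.

(* x_h placed as a block of an endomorphism of V = (+)_k V_k *)
Definition bigmx (x : Rep C Q v) (h : edge Q) : 'M[C]_(\sum_(k < r) v k) :=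
  \mxblock_(a < r, b < r)
     (if (a == tgt h) && (b == src h) then conform_mx 0 (x h) else 0).

Definition nilpotent (x : Rep C Q v) : Prop :=
  exists N : nat, forall s : seq (edge Q), size s = N ->
    foldr (fun h M => bigmx x h *m M) 1%:M s = 0.

(* moment map mu(x)_k = sum_{h'' = k} eps(h) x_h x_{\bar h} *)
Definition mu (x : Rep C Q v) (k : 'I_r) : 'M[C]_(v k) :=
  \sum_(h | tgt h == k)
     conform_mx 0 (eps h *: (x h *m conform_mx (0 : 'M_(v (src h), v (tgt h)))
                                                 (x (erev h)))).

Definition Lambda (x : Rep C Q v) : Prop :=
  nilpotent x /\ forall k, mu x k = 0.

(* codim_{V_j} Im (+)_{h''=j} x_h *)
Definition im_codim (x : Rep C Q v) (j : 'I_r) : nat :=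
  (v j - \rank (\sum_(h | tgt h == j)
      <<conform_mx (0 : 'M_(v (src h), v j)) (x h)^T>>)%MS)%N.

(* dim ker (+)_{h'=i} x_h *)
Definition ker_dim (x : Rep C Q v) (i : 'I_r) : nat :=
  \rank (\bigcap_(h | src h == i)
      kermx (conform_mx (0 : 'M_(v i, v (tgt h))) (x h)^T))%MS.

Definition Lambda_jp (j : 'I_r) (p : nat) (x : Rep C Q v) : Prop :=
  Lambda x /\ im_codim x j = p.

Definition Lambda_ip (i : 'I_r) (p : nat) (x : Rep C Q v) : Prop :=
  Lambda x /\ ker_dim x i = p.

(* "t_j(Z) = p" : Z cap Lambda_{V,j,p} is dense in Z *)
Definition t_is (j : 'I_r) (Z : Rep C Q v -> Prop) (p : nat) : Prop :=
  dense_in (fun x => Z x /\ Lambda_jp j p x) Z.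

(* "t_i^*(Z) = p" : Z cap Lambda^p_{V,i} is dense in Z *)
Definition tstar_is (i : 'I_r) (Z : Rep C Q v -> Prop) (p : nat) : Prop :=
  dense_in (fun x => Z x /\ Lambda_ip i p x) Z.

End Dim.

(* |V''| = c i, |V| = |V'| + |V''|; V_k = V'_k (+) V''_k in coordinates *)
Definition dimC (i : 'I_r) (c : nat) : 'I_r -> nat :=
  fun k => if k == i then c else 0%N.

Definition dimsum (v' v'' : 'I_r -> nat) : 'I_r -> nat :=
  fun k => (v' k + v'' k)%N.

Definition gact (v : 'I_r -> nat) (g : forall k, 'M[C]_(v k)) (x : Rep C Q v)
  : Rep C Q v := fun h => g (tgt h) *m x h *m invmx (g (src h)).

(* q r p^{-1}(A x B): the x in Lambda_V admitting an x-stable graded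
   subspace W with |W| = |V''| and isomorphisms rho_1 : V/W ~ V',
   rho_2 : W ~ V'' with (rho_1 xbar rho_1^-1, rho_2 x|_W rho_2^-1) in A x B.
   Coordinates: W = g^{-1}(0 (+) V''), rho_1, rho_2 induced by g.      *)
Definition qrp_inv (v' v'' : 'I_r -> nat)
    (A : Rep C Q v' -> Prop) (B : Rep C Q v'' -> Prop)
    (x : Rep C Q (dimsum v' v'')) : Prop :=
  Lambda x /\
  exists g : forall k, 'M[C]_(v' k + v'' k),
    (forall k, g k \in unitmx) /\
    let y := gact (v := dimsum v' v'') g x in
    (forall h, ursubmx (y h) = 0) /\           (* W is x-stable *)
    A (fun h => ulsubmx (y h)) /\               (* induced map on V/W *)
    B (fun h => drsubmx (y h)).                 (* restriction to W *)

Definition eta_star (i : 'I_r) (c : nat) (v' : 'I_r -> nat)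
    (Z0 : Rep C Q v' -> Prop) : Rep C Q (dimsum v' (dimC i c)) -> Prop :=
  zcl (qrp_inv (fun x => Z0 x /\ Lambda_ip i 0 x) (@Lambda (dimC i c))).

End Quiver.
Arguments eta_star {R r Q} eps i c {v'} Z0 _.

From Pilot Require Import Defs.
From mathcomp Require Import all_boot all_order all_algebra.
From mathcomp Require Import boolp reals complex zify.
Set Implicit Arguments. Unset Strict Implicit. Unset Printing Implicit Defensive.
Import GRing.Theory Num.Theory.
Local Open Scope ring_scope.

(* The invariant t_j is read off from the rank of the inflow
   (+)_{h''=j} x_h, and {rank <= m} is Zariski closed (vanishing of the
   minors).  Hence on an irreducible set t_j = dim V_j - m, where m is the
   maximal rank reached on it, and it suffices to compare maximal ranks on
   Z0 and on eta^*_{i,c}(Z0).  As j <> i, V_j = V'_j and the inflow at j of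
   an extension of V' by V'' is that of the quotient, so ranks on
   eta^*_{i,c}(Z0) are ranks on Z0.  Conversely, every point of the dense
   set q r p^{-1}(...) is a value, at a point of Z0, of a polynomial map
   E_V' -> E_V that preserves the rank at j and sends Z0 /\ Lambda^0_{V',i}
   into that set: it glues a representation of V' to the zero
   representation of V'' and corrects the gluing maps so that the moment
   map vanishes, which is possible because t_i^* = 0 makes the outflow of
   i injective.  Irreducibility of Z0 then carries the maximal
   rank over to eta^*_{i,c}(Z0). *)

Section Zariski.
Variables (R : realType) (r : nat) (Q : dgraph r) (v : 'I_r -> nat).
Local Notation C := (complex R).
Local Notation Rp := (Rep C Q v).
Implicit Types S T : Rp -> Prop.

Lemma zcl_sub S x : S x -> zcl S x.
Proof. by move=> Sx T _ ST; exact: ST. Qed.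

Lemma zcl_min S T : zclosed T -> (forall y, S y -> T y) -> forall x, zcl S x -> T x.
Proof. by move=> cT ST x; apply. Qed.

Lemma zcl_closed S : zclosed (zcl S).
Proof.
exists (fun f => exists T (FT : (Rp -> C) -> Prop),
   [/\ forall g, FT g -> polyfun g, forall x, T x <-> (forall g, FT g -> g x = 0),
       forall y, S y -> T y & FT f]); split.
  by move=> f [T [FT [pFT _ _]]]; exact: pFT.
move=> x; split.
  move=> Sx f [T [FT [pFT hT ST FTf]]].
  by have /hT := Sx T (ex_intro _ FT (conj pFT hT)) ST; apply.
move=> vanish T [FT [pFT hT]] ST; apply/hT => g FTg.
by apply: vanish; exists T, FT.
Qed.

Lemma zclosed_ext S T : zclosed S -> (forall x, S x <-> T x) -> zclosed T.
Proof. by move=> [F [pF hF]] ST; exists F; split => // x; rewrite -ST. Qed.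

Lemma zclosed0 : zclosed (fun _ : Rp => False).
Proof.
exists (fun f => f = (fun _ => 1)); split; first by move=> f ->; apply: pf_const.
by move=> x; split => // /(_ _ erefl) /eqP; rewrite oner_eq0.
Qed.

Lemma zclosedU S T : zclosed S -> zclosed T -> zclosed (fun x => S x \/ T x).
Proof.
move=> [FS [pS hS]] [FT [pT hT]].
exists (fun f => exists g1 g2, [/\ FS g1, FT g2 & f = (fun x => g1 x * g2 x)]); split.
  by move=> f [g1 [g2 [/pS ? /pT ? ->]]]; apply: pf_mul.
move=> x; split.
  move=> [/hS Sx|/hT Tx] f [g1 [g2 [F1 F2 ->]]].
    by rewrite (Sx _ F1) mul0r.
  by rewrite (Tx _ F2) mulr0.
move=> prod0; apply: contrapT => /not_orP [nS nT].
have /existsNP [g1 /not_implyP [F1 g1x]] : ~ forall f, FS f -> f x = 0 by move/hS.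
have /existsNP [g2 /not_implyP [F2 g2x]] : ~ forall f, FT f -> f x = 0 by move/hT.
have /eqP := prod0 _ (ex_intro _ g1 (ex_intro _ g2 (And3 F1 F2 erefl))).
by rewrite mulf_eq0 => /orP [] /eqP.
Qed.

Lemma zcl_inhabited S x : zcl S x -> exists y, S y.
Proof.
move=> Sx; apply: contrapT => noS.
by apply: (zcl_min zclosed0 _ Sx) => y Sy; apply: noS; exists y.
Qed.

Lemma irreducible_dense_cover (Z D T L : Rp -> Prop) :
  irreducible Z -> zclosed T -> zclosed L -> dense_in D Z ->
  (exists x, Z x /\ ~ L x) -> (forall x, D x -> ~ L x -> T x) ->
  forall x, Z x -> T x.
Proof.
move=> [_ irrZ] cT cL dD [x0 [Zx0 nLx0]] DT.
have cover x : Z x -> T x \/ L x.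
  move=> Zx; apply: (zcl_min (zclosedU cT cL) _ (dD x Zx)) => y Dy.
  by case: (pselect (L y)) => Ly; [right | left; apply: DT].
by case: (irrZ T L cT cL cover) => // ZL; case: nLx0; apply: ZL.
Qed.

End Zariski.

Arguments zclosed0 {R r Q v}.

Section PolyFun.
Variables (R : realType) (r : nat) (Q : dgraph r) (v : 'I_r -> nat).
Local Notation C := (complex R).
Local Notation Rp := (Rep C Q v).

Lemma polyfun_ext (f g : Rp -> C) : polyfun f -> f =1 g -> polyfun g.
Proof. by move=> pf /funext <-. Qed.

Lemma polyfun_sum (I : Type) (s : seq I) (P : pred I) (F : I -> Rp -> C) :
  (forall i, polyfun (F i)) -> polyfun (fun x => \sum_(i <- s | P i) F i x).
Proof.
move=> pF; elim: s => [|a s IH].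
  by apply: (polyfun_ext (pf_const _ _ _)) => x; rewrite big_nil.
case Pa: (P a).
  by apply: (polyfun_ext (pf_add (pF a) IH)) => x; rewrite big_cons Pa.
by apply: (polyfun_ext IH) => x; rewrite big_cons Pa.
Qed.

Lemma polyfun_prod (I : Type) (s : seq I) (P : pred I) (F : I -> Rp -> C) :
  (forall i, polyfun (F i)) -> polyfun (fun x => \prod_(i <- s | P i) F i x).
Proof.
move=> pF; elim: s => [|a s IH].
  by apply: (polyfun_ext (pf_const _ _ _)) => x; rewrite big_nil.
case Pa: (P a).
  by apply: (polyfun_ext (pf_mul (pF a) IH)) => x; rewrite big_cons Pa.
by apply: (polyfun_ext IH) => x; rewrite big_cons Pa.
Qed.

Lemma polyfun_opp (f : Rp -> C) : polyfun f -> polyfun (fun x => - f x).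
Proof.
by move=> pf; apply: (polyfun_ext (pf_mul (pf_const _ _ (-1)) pf)) => x; rewrite mulN1r.
Qed.

Definition polymx m n (X : Rp -> 'M[C]_(m, n)) := forall a b, polyfun (fun x => X x a b).

Lemma polymx_const m n (A : 'M[C]_(m, n)) : polymx (fun _ => A).
Proof. by move=> a b; apply: pf_const. Qed.

Lemma polymx_coord h : polymx (fun x : Rp => x h).
Proof. by move=> a b; apply: pf_coord. Qed.

Lemma polymx_add m n (X Y : Rp -> 'M[C]_(m, n)) :
  polymx X -> polymx Y -> polymx (fun x => X x + Y x).
Proof.
by move=> pX pY a b; apply: (polyfun_ext (pf_add (pX a b) (pY a b))) => x; rewrite mxE.
Qed.

Lemma polymx_opp m n (X : Rp -> 'M[C]_(m, n)) : polymx X -> polymx (fun x => - X x).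
Proof.
by move=> pX a b; apply: (polyfun_ext (polyfun_opp (pX a b))) => x; rewrite mxE.
Qed.

Lemma polymx_scale m n (f : Rp -> C) (X : Rp -> 'M[C]_(m, n)) :
  polyfun f -> polymx X -> polymx (fun x => f x *: X x).
Proof.
by move=> pf pX a b; apply: (polyfun_ext (pf_mul pf (pX a b))) => x; rewrite mxE.
Qed.

Lemma polymx_mul m n p (X : Rp -> 'M[C]_(m, n)) (Y : Rp -> 'M[C]_(n, p)) :
  polymx X -> polymx Y -> polymx (fun x => X x *m Y x).
Proof.
move=> pX pY a b.
apply: (polyfun_ext (polyfun_sum (index_enum 'I_n) xpredT
   (fun k => pf_mul (pX a k) (pY k b)))) => x.
by rewrite mxE.
Qed.

Lemma polymx_tr m n (X : Rp -> 'M[C]_(m, n)) : polymx X -> polymx (fun x => (X x)^T).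
Proof. by move=> pX a b; apply: (polyfun_ext (pX b a)) => x; rewrite mxE. Qed.

Lemma polymx_conform m n m' n' (B : 'M[C]_(m', n')) (X : Rp -> 'M[C]_(m, n)) :
  polymx X -> polymx (fun x => conform_mx B (X x)).
Proof.
rewrite /conform_mx => pX a b.
case: (m =P m') => [em|_]; case: (n =P n') => [en|_]; try exact: pf_const.
by apply: (polyfun_ext (pX (cast_ord (esym em) a) (cast_ord (esym en) b))) => x; rewrite castmxE.
Qed.

Lemma polymx_block m1 m2 n1 n2 (A : Rp -> 'M[C]_(m1, n1)) (B : Rp -> 'M[C]_(m1, n2))
    (Cc : Rp -> 'M[C]_(m2, n1)) (D : Rp -> 'M[C]_(m2, n2)) :
  polymx A -> polymx B -> polymx Cc -> polymx D ->
  polymx (fun x => block_mx (A x) (B x) (Cc x) (D x)).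
Proof.
move=> pA pB pC pD a b.
have blockE x : block_mx (A x) (B x) (Cc x) (D x) a b =
  match split a with
  | inl a' => match split b with inl b' => A x a' b' | inr b' => B x a' b' end
  | inr a' => match split b with inl b' => Cc x a' b' | inr b' => D x a' b' end
  end.
  by rewrite /block_mx [in LHS]mxE; case: (split a) => a'; rewrite mxE; case: (split b).
apply: (polyfun_ext _ (fun x => esym (blockE x))).
by case: (split a) => a'; case: (split b) => b'.
Qed.

Lemma polymx_sum (I : Type) (s : seq I) (P : pred I) m n (F : I -> Rp -> 'M[C]_(m, n)) :
  (forall i, polymx (F i)) -> polymx (fun x => \sum_(i <- s | P i) F i x).
Proof.
move=> pF a b; apply: (polyfun_ext (polyfun_sum s P (fun i => pF i a b))) => x.
by rewrite summxE.
Qed.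

Lemma polymx_det n (X : Rp -> 'M[C]_n) : polymx X -> polyfun (fun x => \det (X x)).
Proof.
move=> pX; apply: polyfun_sum => s; apply: pf_mul; first exact: pf_const.
by apply: polyfun_prod => k; apply: pX.
Qed.

Lemma polymx_adj n (X : Rp -> 'M[C]_n) : polymx X -> polymx (fun x => \adj (X x)).
Proof.
move=> pX a b; apply: (polyfun_ext (f := fun x => cofactor (X x) b a)); last first.
  by move=> x; rewrite mxE.
apply: pf_mul; first exact: pf_const.
apply: polymx_det => c d; apply: (polyfun_ext (pX (lift b c) (lift a d))) => x.
by rewrite !mxE.
Qed.

Lemma polymx_mxsub m n m' n' (f : 'I_m' -> 'I_m) (g : 'I_n' -> 'I_n) (X : Rp -> 'M[C]_(m, n)) :
  polymx X -> polymx (fun x => mxsub f g (X x)).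
Proof. by move=> pX a b; apply: (polyfun_ext (pX (f a) (g b))) => x; rewrite mxE. Qed.

End PolyFun.

Definition polymap (R : realType) (r : nat) (Q : dgraph r) (v1 v2 : 'I_r -> nat)
  (f : Rep (complex R) Q v1 -> Rep (complex R) Q v2) :=
  forall h a b, polyfun (fun z => f z h a b).

Lemma polymap_id (R : realType) (r : nat) (Q : dgraph r) (v : 'I_r -> nat) :
  polymap (fun x : Rep (complex R) Q v => x).
Proof. by move=> h a b; apply: pf_coord. Qed.

Section PolyMap.
Variables (R : realType) (r : nat) (Q : dgraph r) (v1 v2 : 'I_r -> nat).
Local Notation C := (complex R).
Variable f : Rep C Q v1 -> Rep C Q v2.
Hypothesis pf : polymap f.

Lemma polyfun_comp (p : Rep C Q v2 -> C) : polyfun p -> polyfun (fun z => p (f z)).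
Proof. by elim=> *; [apply: pf_const | apply: pf | apply: pf_add | apply: pf_mul]. Qed.

Lemma zclosed_preim (T : Rep C Q v2 -> Prop) : zclosed T -> zclosed (fun z => T (f z)).
Proof.
move=> [F [pF hF]].
exists (fun g => exists2 p, F p & g = (fun z => p (f z))); split.
  by move=> g [p Fp ->]; apply/polyfun_comp/pF.
move=> z; split; first by move=> /hF Tz g [p Fp ->]; apply: Tz.
by move=> vanish; apply/hF => p Fp; apply: (vanish (fun z => p (f z))); exists p.
Qed.

End PolyMap.

Section Minors.
Variable F : fieldType.

Lemma mxrank_mxsub m n k l (f : 'I_k -> 'I_m) (g : 'I_l -> 'I_n) (A : 'M[F]_(m, n)) :
  (\rank (mxsub f g A) <= \rank A)%N.
Proof.
rewrite mxsubrc; apply: leq_trans (mxrankS (rowsub_sub _ _)) _.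
have -> : colsub g A = (rowsub g A^T)^T by apply/matrixP => a b; rewrite !mxE.
by rewrite mxrank_tr -[X in (_ <= X)%N]mxrank_tr mxrankS // rowsub_sub.
Qed.

Lemma mxrank_le_minors a b (A : 'M[F]_(a, b)) m :
  (\rank A <= m)%N <-> (forall k (f : 'I_k -> 'I_a) (g : 'I_k -> 'I_b),
                         (m < k)%N -> \det (mxsub f g A) = 0).
Proof.
split.
  move=> rA k f g mk; apply/eqP; apply: contraTT mk => d0.
  have /mxrank_unit rk_minor : mxsub f g A \in unitmx by rewrite unitmxE unitfE.
  by rewrite -leqNgt -{1}rk_minor (leq_trans (mxrank_mxsub _ _ _)).
move=> minors0; rewrite leqNgt; apply/negP => mlt.
pose f := maxrankfun A.
have full : row_full (rowsub f A)^T.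
  by rewrite /row_full mxrank_tr; move: (maxrowsub_free A); rewrite /row_free.
pose g := fullrankfun full.
have minorE : (rowsub g (rowsub f A)^T)^T = mxsub f g A.
  by apply/matrixP => x y; rewrite !mxE.
have := fullrowsub_unit full.
by rewrite unitmxE -det_tr minorE minors0 // unitr0.
Qed.

End Minors.

Section InRank.
Variables (R : realType) (r : nat) (Q : dgraph r) (v : 'I_r -> nat) (j : 'I_r).
Local Notation C := (complex R).
Local Notation Rp := (Rep C Q v).

Definition in_space (x : Rp) : 'M[C]_(v j) :=
  (\sum_(h | tgt h == j) <<conform_mx (0 : 'M_(v (src h), v j)) (x h)^T>>)%MS.

Definition in_rank (x : Rp) := \rank (in_space x).

Lemma im_codim_in_rank x : im_codim x j = (v j - in_rank x)%N.
Proof. by []. Qed.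

Lemma in_rank_le_dim x : (in_rank x <= v j)%N.
Proof. exact: rank_leq_col. Qed.

Definition in_block (x : Rp) h : 'M[C]_(v (src h), v j) :=
  if tgt h == j then conform_mx (0 : 'M_(v (src h), v j)) (x h)^T else 0.

Local Notation srcrow := {h : edge Q & 'I_(v (src h))}.

Definition in_mx (x : Rp) : 'M[C]_(#|{: srcrow}|, v j) :=
  \matrix_(t, k) in_block x (tag (enum_val t)) (tagged (enum_val t)) k.

Lemma in_mx_eqmx x : (in_mx x :=: in_space x)%MS.
Proof.
apply/eqmxP/andP; split.
  apply/row_subP => t.
  have -> : row t (in_mx x) = row (tagged (enum_val t)) (in_block x (tag (enum_val t))).
    by apply/rowP => k; rewrite !mxE.
  rewrite /in_block; case: ifP => e; last by rewrite row0 sub0mx.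
  apply: submx_trans (row_sub _ _) _.
  by rewrite -genmxE (sumsmx_sup (tag (enum_val t))).
apply/sumsmx_subP => h e; rewrite genmxE; apply/row_subP => k.
have -> : row k (conform_mx (0 : 'M_(v (src h), v j)) (x h)^T) =
          row (enum_rank (Tagged (fun h => 'I_(v (src h))) k)) (in_mx x).
  by apply/rowP => t; rewrite !mxE enum_rankK /= /in_block e.
exact: row_sub.
Qed.

Lemma polymx_in_mx : polymx (fun x : Rp => in_mx x).
Proof.
move=> t k; apply: (polyfun_ext (f := fun x => in_block x (tag (enum_val t)) (tagged (enum_val t)) k)).
  rewrite /in_block; case: (tgt _ == j); last exact: pf_const.
  by apply/polymx_conform/polymx_tr/polymx_coord.
by move=> x; rewrite mxE.
Qed.

Lemma zclosed_in_rank_le m : zclosed (fun x : Rp => (in_rank x <= m)%N).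
Proof.
exists (fun p => exists k (f : 'I_k -> 'I_#|{: srcrow}|) (g : 'I_k -> 'I_(v j)),
            (m < k)%N /\ p = (fun x => \det (mxsub f g (in_mx x)))); split.
  by move=> p [k [f [g [_ ->]]]]; apply/polymx_det/polymx_mxsub/polymx_in_mx.
move=> x; rewrite /in_rank -(in_mx_eqmx x) mxrank_le_minors; split.
  by move=> minors0 p [k [f [g [mk ->]]]]; apply: minors0.
move=> vanish k f g mk.
by apply: (vanish (fun x => \det (mxsub f g (in_mx x)))); exists k, f, g.
Qed.

Lemma zclosed_in_rank_lt m : zclosed (fun x : Rp => (in_rank x < m)%N).
Proof.
case: m => [|m]; first by apply: (zclosed_ext zclosed0) => x; rewrite ltn0.
by apply: (zclosed_ext (zclosed_in_rank_le m)) => x; rewrite ltnS.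
Qed.

End InRank.

Arguments zclosed_in_rank_le {R r Q v}.
Arguments zclosed_in_rank_lt {R r Q v}.

Section MatrixBlocks.
Variable F : fieldType.

Lemma conform0 m n m' n' : conform_mx (0 : 'M[F]_(m', n')) (0 : 'M[F]_(m, n)) = 0.
Proof.
case: (eqVneq m m') => [em|nem]; last by rewrite nonconform_mx // nem.
case: (eqVneq n n') => [en|nen]; last by rewrite nonconform_mx // nen orbT.
by subst; exact: conform_mx_id.
Qed.

Lemma conform_block m1 m2 n1 n2 m1' m2' n1' n2' (A : 'M[F]_(m1, n1)) (B : 'M_(m1, n2))
    (Cc : 'M_(m2, n1)) (D : 'M_(m2, n2)) :
  m1 = m1' -> m2 = m2' -> n1 = n1' -> n2 = n2' ->
  conform_mx (0 : 'M_(m1' + m2', n1' + n2')) (block_mx A B Cc D) =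
  block_mx (conform_mx (0 : 'M_(m1', n1')) A) (conform_mx (0 : 'M_(m1', n2')) B)
           (conform_mx (0 : 'M_(m2', n1')) Cc) (conform_mx (0 : 'M_(m2', n2')) D).
Proof. by move=> e1 e2 e3 e4; subst; rewrite !conform_mx_id. Qed.

Lemma flatmx0_eq m n (A : 'M[F]_(m, n)) : m = 0%N -> A = 0.
Proof. by move=> e; subst; rewrite flatmx0. Qed.

Lemma thinmx0_eq m n (A : 'M[F]_(m, n)) : n = 0%N -> A = 0.
Proof. by move=> e; subst; rewrite thinmx0. Qed.

Lemma sum_block_mx (I : Type) (s : seq I) (P : pred I) m1 m2 n1 n2
    (A : I -> 'M[F]_(m1, n1)) (B : I -> 'M_(m1, n2)) (Cc : I -> 'M_(m2, n1))
    (D : I -> 'M_(m2, n2)) :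
  \sum_(i <- s | P i) block_mx (A i) (B i) (Cc i) (D i) =
  block_mx (\sum_(i <- s | P i) A i) (\sum_(i <- s | P i) B i)
           (\sum_(i <- s | P i) Cc i) (\sum_(i <- s | P i) D i).
Proof.
elim: s => [|a s IH]; first by rewrite !big_nil block_mx0.
by rewrite !big_cons; case: (P a) => //; rewrite IH add_block_mx.
Qed.

End MatrixBlocks.

Section InRankTransfer.
Variables (R : realType) (r : nat) (Q : dgraph r) (v1 v2 : 'I_r -> nat) (j : 'I_r).
Local Notation C := (complex R).

Lemma in_rank_transfer (x : Rep C Q v1) (x' : Rep C Q v2) (G : 'M[C]_(v2 j, v1 j)) :
  row_free G ->
  (forall h, tgt h == j -> (conform_mx (0 : 'M_(v1 (src h), v1 j)) (x h)^T :=: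
                            conform_mx (0 : 'M_(v2 (src h), v2 j)) (x' h)^T *m G)%MS) ->
  in_rank j x = in_rank j x'.
Proof.
move=> freeG eqx; rewrite /in_rank /in_space.
have -> : ((\sum_(h | tgt h == j) <<conform_mx (0 : 'M_(v1 (src h), v1 j)) (x h)^T>>)%MS :=:
    \sum_(h | tgt h == j) <<<<conform_mx (0 : 'M_(v2 (src h), v2 j)) (x' h)^T>> *m G>>)%MS.
  apply: eqmx_sums => h e.
  apply: eqmx_trans (genmxE _) _; apply: eqmx_trans (eqx h e) _.
  apply: eqmx_sym; apply: eqmx_trans (genmxE _) _.
  by apply: eqmxMr; apply: genmxE.
by rewrite -sumsmxMr_gen mxrankMfree.
Qed.

End InRankTransfer.

Section Nilpotent.
Variables (R : realType) (r : nat) (Q : dgraph r).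
Local Notation C := (complex R).

Definition edge_blk (p_ q_ : 'I_r -> nat) (h : edge Q) (X : 'M[C]_(p_ (tgt h), q_ (src h))) :
  'M[C]_(\sum_k p_ k, \sum_k q_ k) :=
  \mxblock_(a < r, b < r) (if (a == tgt h) && (b == src h) then conform_mx 0 X else 0).

Definition diag_blk (p_ q_ : 'I_r -> nat) (D : forall k, 'M[C]_(p_ k, q_ k)) :
  'M[C]_(\sum_k p_ k, \sum_k q_ k) :=
  \mxblock_(a < r, b < r) (if a == b then conform_mx 0 (D a) else 0).

Lemma edge_blk_diag (p_ q_ s_ : 'I_r -> nat) h (X : 'M[C]_(p_ (tgt h), q_ (src h)))
    (D : forall k, 'M[C]_(q_ k, s_ k)) :
  edge_blk X *m diag_blk D = edge_blk (X *m D (src h)).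
Proof.
rewrite /edge_blk /diag_blk mul_mxblock; apply: eq_mxblock => a b.
rewrite (bigD1 b) //= big1 => [|k nk]; last by rewrite (negPf nk) mulmx0.
rewrite eqxx addr0.
case: (a =P tgt h) => [ea|_]; case: (b =P src h) => [eb|_] /=; try by rewrite mul0mx.
by subst; rewrite !conform_mx_id.
Qed.

Lemma diag_blk_edge (p_ q_ s_ : 'I_r -> nat) (D : forall k, 'M[C]_(p_ k, q_ k)) h
    (X : 'M[C]_(q_ (tgt h), s_ (src h))) :
  diag_blk D *m edge_blk X = edge_blk (D (tgt h) *m X).
Proof.
rewrite /edge_blk /diag_blk mul_mxblock; apply: eq_mxblock => a b.
rewrite (bigD1 a) //= big1 => [|k nk]; last by rewrite eq_sym (negPf nk) mul0mx.
rewrite eqxx addr0.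
case: (a =P tgt h) => [ea|_]; case: (b =P src h) => [eb|_] /=; try by rewrite mulmx0.
by subst; rewrite !conform_mx_id.
Qed.

(* A path product of [x] of length [N.+1] factors through one of [x0] of length [N]. *)
Lemma nilpotent_factor (v1 v2 : 'I_r -> nat) (x : Rep C Q v1) (x0 : Rep C Q v2)
    (F : forall k, 'M[C]_(v1 k, v2 k)) (L : forall k, 'M[C]_(v2 k, v1 k)) :
  (forall h, x h *m F (src h) *m L (src h) = x h) ->
  (forall h, L (tgt h) *m x h *m F (src h) = x0 h) ->
  nilpotent x0 -> nilpotent x.
Proof.
move=> xFL Lx0F [N nil0].
pose Fb := diag_blk F; pose Lb := diag_blk L.
have FLb h : bigmx x h *m Fb *m Lb = bigmx x h.
  by rewrite /bigmx -/(edge_blk _) /Fb /Lb !edge_blk_diag xFL.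
have Lx0Fb h : Lb *m bigmx x h *m Fb = bigmx x0 h.
  by rewrite /bigmx -/(edge_blk _) /Fb /Lb diag_blk_edge edge_blk_diag Lx0F.
have pathE t h : foldr (fun h M => bigmx x h *m M) 1%:M (h :: t) =
    bigmx x h *m Fb *m foldr (fun h M => bigmx x0 h *m M) 1%:M t *m Lb.
  elim: t h => [|h' t IH] h /=; first by rewrite !mulmx1 FLb.
  rewrite /= in IH; rewrite IH.
  rewrite -{1}FLb !mulmxA; congr (_ *m _); rewrite -!mulmxA; congr (_ *m (_ *m _)).
  by rewrite !mulmxA Lx0Fb.
exists N.+1 => [[|h t]] // st.
by rewrite pathE nil0 ?mulmx0 ?mul0mx //; case: st.
Qed.

End Nilpotent.

Section Gauge.
Variables (R : realType) (r : nat) (Q : dgraph r) (v : 'I_r -> nat).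
Local Notation C := (complex R).
Variable g : forall k, 'M[C]_(v k).
Hypothesis g_unit : forall k, g k \in unitmx.

Lemma conform_conj (k1 k2 k3 k4 : 'I_r) (Y : 'M[C]_(v k1, v k2)) :
  k1 = k3 -> k2 = k4 ->
  conform_mx (0 : 'M_(v k3, v k4)) (g k1 *m Y *m invmx (g k2)) =
  g k3 *m conform_mx (0 : 'M_(v k3, v k4)) Y *m invmx (g k4).
Proof. by move=> e1 e2; subst; rewrite !conform_mx_id. Qed.

Lemma mu_gact (eps : edge Q -> C) (x : Rep C Q v) k :
  mu eps (gact g x) k = g k *m mu eps x k *m invmx (g k).
Proof.
rewrite /mu mulmx_sumr mulmx_suml; apply: eq_bigr => h /eqP e.
rewrite /gact (conform_conj _ (tgt_rev h) (src_rev h)).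
have -> : g (tgt h) *m x h *m invmx (g (src h)) *m
   (g (src h) *m conform_mx (0 : 'M_(v (src h), v (tgt h))) (x (erev h)) *m invmx (g (tgt h)))
   = g (tgt h) *m (x h *m conform_mx (0 : 'M_(v (src h), v (tgt h))) (x (erev h)))
       *m invmx (g (tgt h)).
  rewrite !mulmxA; congr (_ *m _); rewrite -!mulmxA; congr (_ *m (_ *m _)).
  by rewrite !mulmxA mulVmx // mul1mx.
by rewrite scalemxAl scalemxAr (conform_conj _ e e).
Qed.

Lemma gactK (x : Rep C Q v) : gact (fun k => invmx (g k)) (gact g x) = x.
Proof.
apply: functional_extensionality_dep => h; rewrite /gact invmxK.
by rewrite !mulmxA mulVmx // mul1mx -mulmxA mulVmx // mulmx1.
Qed.

Lemma gactKV (x : Rep C Q v) : gact g (gact (fun k => invmx (g k)) x) = x.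
Proof.
apply: functional_extensionality_dep => h; rewrite /gact invmxK.
by rewrite !mulmxA mulmxV // mul1mx -mulmxA mulmxV // mulmx1.
Qed.

Lemma in_rank_gact j (x : Rep C Q v) : in_rank j (gact g x) = in_rank j x.
Proof.
apply: (in_rank_transfer (G := (g j)^T)); first by rewrite row_free_unit unitmx_tr.
have trE (k1 k2 : 'I_r) (Y : 'M_(v k1, v k2)) : k1 = j ->
    conform_mx (0 : 'M_(v k2, v j)) (g k1 *m Y *m invmx (g k2))^T =
    (invmx (g k2))^T *m conform_mx (0 : 'M_(v k2, v j)) Y^T *m (g j)^T.
  by move=> e; subst; rewrite !conform_mx_id !trmx_mul mulmxA.
move=> h /eqP e; rewrite /gact trE // -mulmxA; apply: eqmxMfull.
by rewrite row_full_unit unitmx_tr unitmx_inv.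
Qed.

Lemma Lambda_gact (eps : edge Q -> C) (x : Rep C Q v) :
  Lambda eps x -> Lambda eps (gact g x).
Proof.
move=> [nil_x mu_x]; split; last by move=> k; rewrite mu_gact mu_x mulmx0 mul0mx.
apply: (nilpotent_factor (F := g) (L := fun k => invmx (g k))) nil_x => h.
  by rewrite /gact mulmxK.
by rewrite /gact !mulmxA mulVmx // mul1mx mulmxKV.
Qed.

End Gauge.


Section Extension.
Variables (R : realType) (r : nat) (Q : dgraph r).
Local Notation C := (complex R).
Variable eps : edge Q -> C.
Variables (i : 'I_r) (c : nat) (v' : 'I_r -> nat).
Local Notation v'' := (dimC i c).
Local Notation V := (dimsum v' v'').

Lemma dimC_ne k : k != i -> v'' k = 0%N.
Proof. by rewrite /dimC => /negbTE ->. Qed.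

(* No edge is a loop, so one end of every edge carries no [V'']. *)
Lemma rep_dimC0 (h : edge Q) (M : 'M[C]_(v'' (tgt h), v'' (src h))) : M = 0.
Proof.
case: (eqVneq (tgt h) i) => [e|ne]; last exact/flatmx0_eq/dimC_ne.
by apply/thinmx0_eq/dimC_ne; rewrite -e; exact: noloop.
Qed.

Lemma Lambda_dimC (z : Rep C Q v'') : Lambda eps z.
Proof.
have z0 h : z h = 0 by apply: rep_dimC0.
split; last by move=> k; rewrite /mu big1 // => h _; rewrite z0 mul0mx scaler0 conform0.
have bigmx0 h : bigmx z h = 0.
  rewrite /bigmx -[RHS](mxblock0 (p_ := v'') (q_ := v'')).
  by apply: eq_mxblock => a b; rewrite z0 conform0; case: ifP.
by exists 1%N => [[|h [|h' t]]] // _ /=; rewrite bigmx0 mul0mx.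
Qed.

Definition ext_rep (a : Rep C Q v') (w : forall h, 'M[C]_(v'' (tgt h), v' (src h))) :
  Rep C Q V := fun h => block_mx (a h) 0 (w h) 0.

Definition mu_off k (a : Rep C Q v') (w : forall h, 'M[C]_(v'' (tgt h), v' (src h))) :
  'M[C]_(v'' k, v' k) :=
  \sum_(h | tgt h == k) conform_mx (0 : 'M_(v'' k, v' k))
      (eps h *: (w h *m conform_mx (0 : 'M_(v' (src h), v' (tgt h))) (a (erev h)))).

Lemma ext_repE (y : Rep C Q V) : (forall h, ursubmx (y h) = 0) ->
  y = ext_rep (fun h => ulsubmx (y h)) (fun h => dlsubmx (y h)).
Proof.
move=> ur0; apply: functional_extensionality_dep => h.
by rewrite /ext_rep -(ur0 h) -(rep_dimC0 (drsubmx (y h))) submxK.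
Qed.

Lemma mu_ext_rep a w k :
  mu eps (ext_rep a w) k = block_mx (mu eps a k) 0 (mu_off k a w) 0.
Proof.
have sum0 m n : \sum_(h : edge Q | tgt h == k) (0 : 'M[C]_(m, n)) = 0 by rewrite big1_eq.
rewrite /mu /mu_off -[in RHS](sum0 (v' k) (v'' k)) -(sum0 (v'' k) (v'' k)) -sum_block_mx.
apply: eq_bigr => h /eqP e.
rewrite /ext_rep (@conform_block _ _ _ _ _ (v' (src h)) (v'' (src h)) (v' (tgt h)) (v'' (tgt h)));
  rewrite ?tgt_rev ?src_rev //.
rewrite !conform0 mulmx_block !mulmx0 !mul0mx !addr0 scale_block_mx !scaler0.
by rewrite (@conform_block _ _ _ _ _ (v' k) (v'' k) (v' k) (v'' k)) ?e // !conform0.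
Qed.

Lemma Lambda_ext_rep a w :
  Lambda eps a -> mu_off i a w = 0 -> Lambda eps (ext_rep a w).
Proof.
move=> [nil_a mu_a] off0; split; last first.
  move=> k; rewrite mu_ext_rep mu_a.
  case: (eqVneq k i) => [->|nk]; first by rewrite off0 block_mx0.
  by rewrite (flatmx0_eq (mu_off _ _ _) (dimC_ne nk)) block_mx0.
apply: (nilpotent_factor (F := fun k => col_mx 1%:M 0) (L := fun k => row_mx 1%:M 0)) nil_a => h.
  by rewrite /ext_rep mul_block_col mul_col_row !(mulmx1, mulmx0, mul0mx, addr0).
by rewrite /ext_rep mul_row_block mul_row_col !(mul1mx, mul0mx, mulmx0, mulmx1, addr0).
Qed.

Lemma in_rank_ext j (y : Rep C Q V) : j != i -> (forall h, ursubmx (y h) = 0) ->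
  in_rank j y = in_rank j (fun h => ulsubmx (y h)).
Proof.
move=> ji ur0; apply: (in_rank_transfer (G := row_mx 1%:M 0)).
  by apply/row_freeP; exists (col_mx 1%:M 0); rewrite mul_row_col mulmx1 mulmx0 addr0.
move=> h /eqP e.
rewrite -[y h]submxK ur0 tr_block_mx.
rewrite (@conform_block _ _ _ _ _ (v' (src h)) (v'' (src h)) (v' j) (v'' j)) ?e //.
rewrite (thinmx0_eq (conform_mx _ (dlsubmx (y h))^T) (dimC_ne ji)).
rewrite (thinmx0_eq (conform_mx _ (drsubmx (y h))^T) (dimC_ne ji)) trmx0 conform0 block_mxKul.
rewrite mul_mx_row mulmx1 mulmx0 /block_mx row_mx0.
by apply: eqmx_trans (eqmx_sym (addsmxE _ _)) _; exact: addsmx0.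
Qed.

Lemma in_rank_ext_rep j a w : j != i -> in_rank j (ext_rep a w) = in_rank j a.
Proof.
move=> ji; rewrite in_rank_ext // => [|h]; last by rewrite block_mxKur.
by congr (in_rank j _); apply: functional_extensionality_dep => h; rewrite block_mxKul.
Qed.

End Extension.

Section Lift.
Variables (R : realType) (r : nat) (Q : dgraph r).
Local Notation C := (complex R).
Variable eps : edge Q -> C.
Variables (i : 'I_r) (c : nat) (v' : 'I_r -> nat).
Local Notation v'' := (dimC i c).
Local Notation V := (dimsum v' v'').
Implicit Types (a : Rep C Q v') (w : forall h : edge Q, 'M[C]_(v'' (tgt h), v' (src h)))
  (Cm : forall h : edge Q, 'M[C]_(v' i, v' (src h))).

Definition twist_mx Cm a : 'M[C]_(v' i) :=
  \sum_(h | tgt h == i) eps h *: (Cm h *m conform_mx (0 : 'M_(v' (src h), v' i))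
      (conform_mx (0 : 'M_(v' (src h), v' (tgt h))) (a (erev h)))).

(* [mu_off i a] is linear in [w] and maps [fun h => conform_mx 0 (K *m Cm h)] *)
(* to [K *m twist_mx Cm a] for every [K]; the adjugate instead of the inverse  *)
(* of [twist_mx Cm a] keeps the correction polynomial in [a].                 *)
Definition w_corr Cm w a h : 'M[C]_(v'' (tgt h), v' (src h)) :=
  \det (twist_mx Cm a) *: w h
  - conform_mx 0 (mu_off eps i a w *m \adj (twist_mx Cm a) *m Cm h).

Definition ext_lift (g : forall k, 'M[C]_(V k)) w Cm a : Rep C Q V :=
  gact (fun k => invmx (g k)) (ext_rep a (w_corr Cm w a)).

Lemma mu_off_corr Cm w a : mu_off eps i a (w_corr Cm w a) = 0.
Proof.
rewrite /mu_off /w_corr.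
set K := mu_off eps i a w *m \adj (twist_mx Cm a).
have corrE m n m' n' p (W : 'M[C]_(m, p)) (Kc : 'M[C]_(m', p)) (A : 'M[C]_(p, n)) e d :
    m = m' -> n = n' ->
    conform_mx (0 : 'M_(m', n')) (e *: ((d *: W - conform_mx (0 : 'M_(m, p)) Kc) *m A)) =
    d *: conform_mx (0 : 'M_(m', n')) (e *: (W *m A)) - Kc *m (e *: conform_mx 0 A).
  move=> e1 e2; subst; rewrite !conform_mx_id mulmxBl scalerBr -scalemxAl !scalerA.
  by rewrite mulrC -scalemxAr.
rewrite (eq_bigr (fun h => \det (twist_mx Cm a) *: conform_mx 0
     (eps h *: (w h *m conform_mx (0 : 'M_(v' (src h), v' (tgt h))) (a (erev h))))
   - K *m (eps h *: (Cm h *m conform_mx (0 : 'M_(v' (src h), v' i))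
      (conform_mx (0 : 'M_(v' (src h), v' (tgt h))) (a (erev h))))))); last first.
  by move=> h /eqP e; rewrite corrE ?e // -mulmxA -scalemxAr.
rewrite sumrB -scaler_sumr -mulmx_sumr -/(mu_off eps i a w) -/(twist_mx Cm a).
by rewrite /K -mulmxA mul_adj_mx mul_mx_scalar subrr.
Qed.

Lemma w_corr_id Cm w a : twist_mx Cm a = 1%:M -> mu_off eps i a w = 0 -> w_corr Cm w a = w.
Proof.
move=> twist1 off0; apply: functional_extensionality_dep => h.
by rewrite /w_corr twist1 det1 scale1r off0 !mul0mx conform0 subr0.
Qed.

Section FixedGauge.
Variable g : forall k, 'M[C]_(V k).
Hypothesis g_unit : forall k, g k \in unitmx.

Lemma gact_ext_lift w Cm a : gact g (ext_lift g w Cm a) = ext_rep a (w_corr Cm w a).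
Proof. exact: gactKV. Qed.

Lemma Lambda_ext_lift w Cm a : Lambda eps a -> Lambda eps (ext_lift g w Cm a).
Proof.
move=> La; apply: (Lambda_gact (g := fun k => invmx (g k))).
  by move=> k; rewrite unitmx_inv.
by apply: Lambda_ext_rep La _; apply: mu_off_corr.
Qed.

Lemma ext_lift_qrp (A : Rep C Q v' -> Prop) w Cm a :
  A a -> Lambda eps a -> qrp_inv eps A (@Lambda _ _ _ eps v'') (ext_lift g w Cm a).
Proof.
move=> Aa La; split; first exact: Lambda_ext_lift.
exists g; split => //; rewrite gact_ext_lift.
split; first by move=> h; rewrite block_mxKur.
split; last exact: Lambda_dimC.
by rewrite (functional_extensionality_dep (fun h => block_mxKul _ _ _ _)).
Qed.

Lemma in_rank_ext_lift j w Cm a : j != i -> in_rank j (ext_lift g w Cm a) = in_rank j a.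
Proof. by move=> ji; rewrite -(in_rank_gact g_unit) gact_ext_lift in_rank_ext_rep. Qed.

Lemma ext_lift_at Cm (x : Rep C Q V) :
  Lambda eps x -> (forall h, ursubmx (gact g x h) = 0) ->
  twist_mx Cm (fun h => ulsubmx (gact g x h)) = 1%:M ->
  ext_lift g (fun h => dlsubmx (gact g x h)) Cm (fun h => ulsubmx (gact g x h)) = x.
Proof.
move=> [_ mu_x] ur0 twist1.
have xE := ext_repE ur0.
have off0 : mu_off eps i (fun h => ulsubmx (gact g x h)) (fun h => dlsubmx (gact g x h)) = 0.
  have := mu_gact g_unit eps x i; rewrite mu_x mulmx0 mul0mx {1}xE mu_ext_rep.
  by move/(congr1 dlsubmx); rewrite block_mxKdl => ->; apply/matrixP => a b; rewrite !mxE.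
by rewrite /ext_lift w_corr_id // -xE gactK.
Qed.

Lemma polymap_ext_lift w Cm : polymap (ext_lift g w Cm).
Proof.
have ptwist : polymx (twist_mx Cm).
  apply: polymx_sum => h; apply: polymx_scale; first exact: pf_const.
  apply: polymx_mul; first exact: polymx_const.
  by apply/polymx_conform/polymx_conform/polymx_coord.
have poff : polymx (fun a => mu_off eps i a w).
  apply: polymx_sum => h; apply: polymx_conform; apply: polymx_scale; first exact: pf_const.
  by apply: polymx_mul; [exact: polymx_const | apply/polymx_conform/polymx_coord].
move=> h; rewrite /ext_lift /gact invmxK.
apply: polymx_mul; last exact: polymx_const.
apply: polymx_mul; first exact: polymx_const.
apply: polymx_block; try exact: polymx_const; first exact: polymx_coord.
apply: polymx_add; first by apply: polymx_scale; [exact: polymx_det | exact: polymx_const].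
apply/polymx_opp/polymx_conform/polymx_mul; last exact: polymx_const.
by apply: polymx_mul => //; exact: polymx_adj.
Qed.

End FixedGauge.

Hypothesis eps_nz : forall h, eps h != 0.

(* [ker_dim a i = 0] makes the outflow of [i] injective, i.e. the column   *)
(* spaces of the [a (erev h)] with [tgt h = i] span [V'_i]; write [1] in them. *)
Lemma exists_twist_unit a : ker_dim a i = 0%N -> exists Cm, twist_mx Cm a = 1%:M.
Proof.
move=> ker0.
pose Ah h : 'M[C]_(v' (src h), v' i) := conform_mx (0 : 'M_(v' (src h), v' i))
      (conform_mx (0 : 'M_(v' (src h), v' (tgt h))) (a (erev h))).
pose N := (\sum_(h | tgt h == i) <<Ah h>>)%MS.
have fullN : row_full N.
  apply: contraT => nfull.
  pose u := kermx N^T.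
  have rk_u : (0 < \rank u)%N.
    rewrite mxrank_ker mxrank_tr subn_gt0 ltn_neqAle rank_leq_col andbT.
    by move: nfull; rewrite /row_full.
  have uA h : tgt h == i -> u *m (Ah h)^T = 0.
    move=> th; have : (<<Ah h>> <= N)%MS := sumsmx_sup h th (submx_refl _).
    by rewrite genmxE => /submxP [D ->]; rewrite trmx_mul mulmxA mulmx_ker mul0mx.
  suff : (u <= \bigcap_(h | src h == i)
            kermx (conform_mx (0 : 'M_(v' i, v' (tgt h))) (a h)^T))%MS.
    by move/mxrankS; rewrite /ker_dim in ker0; rewrite ker0 leqn0 => /eqP u0; rewrite u0 in rk_u.
  have conformK l m n p q k (u' : 'M[C]_(l, k)) (A : 'M[C]_(m, n)) :
      m = p -> n = q -> n = k ->
      u' *m (conform_mx (0 : 'M_(p, k)) (conform_mx (0 : 'M_(p, q)) A))^T = 0 ->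
      u' *m conform_mx (0 : 'M_(k, m)) A^T = 0.
    by move=> e1 e2 e3; subst; rewrite !conform_mx_id.
  apply/sub_bigcapmxP => e se; rewrite sub_kermx; apply/eqP.
  have := uA (erev e); rewrite tgt_rev se /Ah => /(_ isT).
  move: (Defs.revK e); move: (erev (erev e)) => e' E; subst e'.
  by apply: conformK; rewrite ?src_rev ?tgt_rev ?(eqP se).
have /sub_sumsmxP [U sumU] : (1%:M <= N)%MS by apply: submx_full.
have coef h : exists D : 'M[C]_(v' i, v' (src h)), <<Ah h>>%MS == D *m Ah h.
  have /submxP [D eD] : (<<Ah h>> <= Ah h)%MS by rewrite genmxE.
  by exists D; rewrite eD.
exists (fun h => (eps h)^-1 *: (U h *m xchoose (coef h))).
rewrite /twist_mx sumU; apply: eq_bigr => h _.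
move: (eqP (xchooseP (coef h))); move: (xchoose (coef h)) => D ->.
by rewrite -/(Ah h) -scalemxAl scalerA mulfV // scale1r mulmxA.
Qed.

End Lift.

Section MaxRank.
Variables (R : realType) (r : nat) (Q : dgraph r) (eps : edge Q -> complex R) (j : 'I_r).

Lemma exists_max_in_rank (v : 'I_r -> nat) (Z : Rep (complex R) Q v -> Prop) :
  (exists x, Z x) ->
  exists m, (forall x, Z x -> (in_rank j x <= m)%N) /\ exists x, Z x /\ in_rank j x = m.
Proof.
move=> [x Zx].
pose P n := `[< exists x, Z x /\ in_rank j x = n >].
have exP : exists n, P n by exists (in_rank j x); apply/asboolP; exists x.
have boundP n : P n -> (n <= v j)%N by move=> /asboolP [y [_ <-]]; apply: in_rank_le_dim.
case: (ex_maxnP exP boundP) => m /asboolP attained max_m.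
by exists m; split => // y Zy; apply: max_m; apply/asboolP; exists y.
Qed.

Lemma t_is_max_rank (v : 'I_r -> nat) (Z : Rep (complex R) Q v -> Prop) m p :
  (forall x, Z x -> (in_rank j x <= m)%N) -> (exists x, Z x /\ in_rank j x = m) ->
  t_is eps j Z p -> p = (v j - m)%N.
Proof.
move=> le_m [x0 [Zx0 rx0]] dense.
have [y [Zy [_ cy]]] := zcl_inhabited (dense x0 Zx0).
have : (in_rank j x0 <= v j - p)%N.
  apply: (zcl_min (zclosed_in_rank_le j (v j - p)) _ (dense x0 Zx0)) => z [_ [_]].
  by rewrite im_codim_in_rank; have := in_rank_le_dim j z; lia.
move: cy; rewrite im_codim_in_rank rx0; have := le_m y Zy; have := in_rank_le_dim j y; lia.
Qed.

Lemma dense_max_rank (v : 'I_r -> nat) (Z D : Rep (complex R) Q v -> Prop) m :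
  dense_in D Z -> (exists x, Z x /\ in_rank j x = m) ->
  exists x, D x /\ (m <= in_rank j x)%N.
Proof.
move=> dD [x [Zx rx]]; apply: contrapT => none.
suff : (in_rank j x < m)%N by rewrite rx ltnn.
apply: (zcl_min (zclosed_in_rank_lt j m) _ (dD x Zx)) => y Dy.
by rewrite ltnNge; apply/negP => le_y; apply: none; exists y.
Qed.

(* The maximal-rank locus of an irreducible [Z] is open and nonempty, hence *)
(* dense; so is its trace on any dense [D], and closed conditions pass to [Z]. *)
Lemma max_rank_cover (v1 v2 : 'I_r -> nat) (Z D : Rep (complex R) Q v1 -> Prop)
    (T : Rep (complex R) Q v2 -> Prop) (f : Rep (complex R) Q v1 -> Rep (complex R) Q v2) m :
  irreducible Z -> dense_in D Z -> polymap f -> zclosed T ->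
  (exists x, Z x /\ in_rank j x = m) ->
  (forall z, D z -> (m <= in_rank j z)%N -> T (f z)) -> forall z, Z z -> T (f z).
Proof.
move=> irrZ dD pf cT [x0 [Zx0 rx0]] DT.
apply: (irreducible_dense_cover irrZ (zclosed_preim pf cT) (zclosed_in_rank_lt j m) dD).
  by exists x0; rewrite rx0 ltnn.
by move=> z Dz /negP; rewrite -leqNgt; apply: DT.
Qed.

End MaxRank.

Section EtaStar.
Variables (R : realType) (r : nat) (Q : dgraph r).
Local Notation C := (complex R).
Variable eps : edge Q -> C.
Variables (i j : 'I_r) (c : nat) (v' : 'I_r -> nat).
Variable Z0 : Rep C Q v' -> Prop.
Hypothesis Z0_irr : irreducible Z0.
Hypothesis Z0_Lambda : forall x, Z0 x -> Lambda eps x.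
Variable m : nat.
Hypothesis in_rank_Z0 : forall x, Z0 x -> (in_rank j x <= m)%N.
Hypothesis in_rank_Z0_max : exists x, Z0 x /\ in_rank j x = m.

Lemma t_is_component p : t_is eps j Z0 p <-> p = (v' j - m)%N.
Proof.
split; first exact: t_is_max_rank.
move=> -> x Zx.
apply: (max_rank_cover (f := id) Z0_irr (fun y Zy => zcl_sub Zy) (@polymap_id _ _ _ _)
          (zcl_closed _) in_rank_Z0_max _ Zx) => z Zz rz.
apply: zcl_sub; split=> //; split; first exact: Z0_Lambda.
by rewrite im_codim_in_rank; have := in_rank_Z0 Zz; lia.
Qed.

Hypothesis eps_nz : forall h, eps h != 0.
Hypothesis ji : j != i.
Hypothesis Z0_tstar0 : tstar_is eps i Z0 0.

Local Notation V := (dimsum v' (dimC i c)).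
Local Notation S := (qrp_inv eps (fun x => Z0 x /\ Lambda_ip eps i 0 x)
                       (@Lambda _ _ _ eps (dimC i c))).

Lemma in_rank_qrp s : S s -> (in_rank j s <= m)%N.
Proof.
case=> _ [g [g_unit [ur0 [[Za _] _]]]].
by rewrite -(in_rank_gact g_unit) (in_rank_ext ji ur0); apply: in_rank_Z0.
Qed.

Lemma t_is_eta_star p : t_is eps j (eta_star eps i c Z0) p <-> p = (v' j - m)%N.
Proof.
have dimVj : V j = v' j by rewrite /dimsum dimC_ne ?addn0.
have le_m x : eta_star eps i c Z0 x -> (in_rank j x <= m)%N.
  exact: zcl_min (zclosed_in_rank_le j m) in_rank_qrp x.
split.
  rewrite -dimVj; apply: t_is_max_rank => //.
  have [a [[Za La] ra]] := dense_max_rank Z0_tstar0 in_rank_Z0_max.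
  pose s := ext_lift eps (fun k => 1%:M : 'M[C]_(V k)) (fun h => 0) (fun h => 0) a.
  have unit1 k : (1%:M : 'M[C]_(V k)) \in unitmx := unitmx1 _ _.
  have rs : in_rank j s = in_rank j a by apply: in_rank_ext_lift.
  have Es : eta_star eps i c Z0 s.
    by apply: zcl_sub; exact: (ext_lift_qrp unit1 _ _ (conj Za La) (proj1 La)).
  by exists s; split => //; apply/eqP; rewrite eqn_leq le_m //= rs.
move=> -> x; apply: zcl_min (zcl_closed _) _ x => s Ss.
have [Ls [g [g_unit [ur0 [[Za La] _]]]]] := Ss.
have [Cm twist1] := exists_twist_unit eps_nz (proj2 La).
rewrite -(ext_lift_at g_unit Ls ur0 twist1).
apply: (max_rank_cover Z0_irr Z0_tstar0 (polymap_ext_lift _ _ _ _) (zcl_closed _) in_rank_Z0_max _ Za).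
move=> z Dz rz; have [Zz [Lz _]] := Dz.
apply: zcl_sub; split; first by apply: zcl_sub; apply: (ext_lift_qrp g_unit).
split; first exact: Lambda_ext_lift.
by rewrite im_codim_in_rank dimVj (in_rank_ext_lift eps g_unit _ _ _ ji); have := in_rank_Z0 Zz; lia.
Qed.

End EtaStar.

Theorem lemma6p4 (R : realType) (r : nat) (Q : dgraph r)
  (eps : edge Q -> complex R)
  (eps_nz : forall h, eps h != 0)
  (eps_rev : forall h, eps h + eps (erev h) = 0)
  (i j : 'I_r) (hij : i != j)
  (v' : 'I_r -> nat) (Z0 : Rep (complex R) Q v' -> Prop)
  (hZ0 : irr_component (v := v') (Lambda eps (v := v')) Z0)
  (ht : tstar_is eps i Z0 0)
  (c : nat) :
  forall p : nat,
    t_is eps j (eta_star eps i c Z0) p <-> t_is eps j Z0 p.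
Proof.
(* The argument works for any nowhere-vanishing [eps]. *)
have ji : j != i by rewrite eq_sym.
case: hZ0 => Z0_irr [Z0_Lambda _] p.
have [m [le_m max_m]] := exists_max_in_rank j (proj1 Z0_irr).
rewrite (t_is_eta_star c Z0_irr le_m max_m eps_nz ji ht).
by rewrite (t_is_component Z0_irr Z0_Lambda le_m max_m).
Qed.
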